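(* Let $\Delta$ be a finite simplicial complex of dimension $d$ with a gradient vector field $\mathcal{V}$, let $k\in\{1,\dots,d\}$, let $(\sigma_0,\tau_0)$ be a cancellable critical pair ($\dim\sigma_0=k$, $\dim\tau_0=k-1$), and let $\mathcal{W}$ be obtained from $\mathcal{V}$ by cancelling it. Let $\delta_q^{\mathcal{V}}:C_{q-1}^{\mathcal{V}}(\Delta)\to C_q^{\mathcal{V}}(\Delta)$ and $\delta_q^{\mathcal{W}}:C_{q-1}^{\mathcal{W}}(\Delta)\to C_q^{\mathcal{W}}(\Delta)$ be the $q$-th coboundary maps of the co-Morse complexes of $\mathcal{V}$ and $\mathcal{W}$. Let $\sigma_0,\dots,\sigma_n$ be the $\mathcal{V}$-critical $k$-simplices and $\tau_0,\dots,\tau_m$ the $\mathcal{V}$-critical $(k-1)$-simplices. Then: (1) For $q>k+1$ or $q<k-1$, $\delta_q^{\mathcal{W}}=\delta_q^{\mathcal{V}}$. (2) For every $\mathcal{W}$-critical $(k-2)$-simplex $\beta$, if $\delta_{k-1}^{\mathcal{V}}(\beta)=\sum_{i=0}^m b_i\tau_i$, then $\delta_{k-1}^{\mathcal{W}}(\beta)=\sum_{i=1}^m b_i\tau_i$. (3) $\delta_{k+1}^{\mathcal{W}}$ is the restriction of $\delta_{k+1}^{\mathcal{V}}$ to the subgroup $C_k^{\mathcal{W}}(\Delta)\subseteq C_k^{\mathcal{V}}(\Delta)$. (4) If $\delta_k^{\mathcal{V}}(\tau_i)=\sum_{j=0}^n a_{ji}\sigma_j$ for all $i\in\{0,\dots,m\}$,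 then for all $i\in\{1,\dots,m\}$, \[\delta_k^{\mathcal{W}}(\tau_i)=\sum_{j=1}^n\bigl(a_{ji}-a_{00}\,a_{0i}\,a_{j0}\bigr)\sigma_j.\]
   Context: A (finite abstract) simplicial complex $\Delta$: finite family of finite sets closed under subsets; $q$-simplex = member with $q+1$ elements. Fix a total order on vertices, orient simplices increasingly. Incidence number: for a $q$-simplex $\sigma$ and $(q-1)$-simplex $\tau$, $\langle\sigma,\tau\rangle=(-1)^p$ if $\tau$ is $\sigma$ with its $p$-th vertex deleted (counting from $0$), $0$ if $\tau\not\subseteq\sigma$. A discrete vector field is a set of pairs $(\alpha,\beta)$, $\alpha\subsetneq\beta$, $\dim\beta=\dim\alpha+1$, each simplex in at most one pair. A $\mathcal{V}$-trajectory from a $q$-simplex $\beta_0$ to a $(q-1)$-simplex $\alpha_{r+1}$ is a sequence $\beta_0,\alpha_1,\beta_1,\dots,\alpha_r,\beta_r,\alpha_{r+1}$, $r\ge0$, with $(\alpha_i,\beta_i)\in\mathcal{V}$, $\alpha_1\subsetneq\beta_0$, $\alpha_{i+1}\subsetneq\beta_i$, $\alpha_{i+1}\ne\alpha_i$; its weight is $\prod_{i=1}^r(-\langle\beta_{i-1},\alpha_i\rangle\langle\beta_i,\alpha_i\rangle)\cdot\langle\beta_r,\alpha_{r+1}\rangle$ (similarly for trajectories ending at a $q$-simplex $\beta_r$, without the last factor). A co-$\mathcal{V}$-trajectory from a $(q-1)$-simplex $\tau$ to a $q$-simplex $\sigma$ is the reverse of a $\mathcal{V}$-trajectory from $\sigma$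 to $\tau$, with the same weight. A gradient vector field admits no trajectory with $r>0$ and $\beta_r=\beta_0$. A nonempty simplex is critical if in no pair (or a $0$-simplex paired with $\emptyset$). $C_q^{\mathcal{V}}(\Delta)$ is the free abelian group on $\mathcal{V}$-critical $q$-simplices. The Morse boundary $\partial_q^{\mathcal{V}}(\beta)=\sum_\alpha(\sum_P w(P))\alpha$, sum over $\mathcal{V}$-critical $(q-1)$-simplices $\alpha$ and $\mathcal{V}$-trajectories $P$ from $\beta$ to $\alpha$. The co-Morse coboundary $\delta_q^{\mathcal{V}}(\tau)=\sum_\sigma(\sum_Q w(Q))\sigma$ for a $\mathcal{V}$-critical $(q-1)$-simplex $\tau$, sum over $\mathcal{V}$-critical $q$-simplices $\sigma$ and co-$\mathcal{V}$-trajectories $Q$ from $\tau$ to $\sigma$; thus the coefficient of $\sigma$ in $\delta_q^{\mathcal{V}}(\tau)$ equals the coefficient of $\tau$ in $\partial_q^{\mathcal{V}}(\sigma)$. Cancellation: if $\sigma_0$ ($k$-simplex) and $\tau_0$ ($(k-1)$-simplex) are $\mathcal{V}$-critical with a unique $\mathcal{V}$-trajectory $P_0:\sigma_0=\beta_0,\alpha_1,\beta_1,\dots,\alpha_r,\beta_r,\alpha_{r+1}=\tau_0$ between them, $(\sigma_0,\tau_0)$ is a cancellable critical pair and $\mathcal{W}=(\mathcal{V}\setminus\{(\alpha_i,\beta_i):1\le i\le r\})\cup\{(\alpha_{i+1},\beta_i):0\le i\le r\}$; $\mathcal{W}$ is a gradient vector field whose critical simplices are the $\mathcal{V}$-critical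 ones except $\sigma_0,\tau_0$. *)

(* Abstract simplicial complexes on the vertex set 'I_N,
   ordered by the natural order of 'I_N; simplices are finite sets of
   vertices, a q-simplex has q+1 elements. *)
From mathcomp Require Import all_boot all_order all_algebra.
Set Implicit Arguments. Unset Strict Implicit. Unset Printing Implicit Defensive.
Import GRing.Theory Num.Theory.
Local Open Scope ring_scope.

Notation simplex N := {set 'I_N}.
Notation vpair N := (simplex N * simplex N)%type.

Definition is_complex N (D : {set simplex N}) : Prop :=
  forall s t : simplex N, s \in D -> t \subset s -> t \in D.

Definition complex_dim N (D : {set simplex N}) (d : nat) : Prop :=
  (exists2 s, s \in D & #|s| = d.+1) /\ (forall s, s \in D -> (#|s| <= d.+1)%N).

Definition incidence N (s t : simplex N) : int :=
  if (t \subset s) && (#|s| == #|t|.+1)%N then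
    match [pick x in s :\: t] with
    | Some v => (-1) ^+ #|[set x in s | (val x < val v)%N]|
    | None => 0
    end
  else 0.

Definition is_dvf N (D : {set simplex N}) (V : {set vpair N}) : Prop :=
  (forall p, p \in V ->
     [/\ p.1 \in D, p.2 \in D, p.1 \proper p.2 & #|p.2| = (#|p.1|).+1]) /\
  (forall p p' x, p \in V -> p' \in V ->
     (x == p.1) || (x == p.2) -> (x == p'.1) || (x == p'.2) -> p = p').

(* [vpath V n b pa s] : s = [:: (a_1,b_1); ...; (a_r,b_r)] is such that
   b, a_1, b_1, ..., a_r, b_r satisfies the V-trajectory conditions, with
   the b's having n elements (dimension n-1), the a's n-1 elements,
   and pa the previous a (None for the starting simplex). *)
Fixpoint vpath N (V : {set vpair N}) (n : nat) (b : simplex N)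
    (pa : option (simplex N)) (s : seq (vpair N)) : bool :=
  match s with
  | [::] => true
  | (a, b') :: s' =>
      [&& (a, b') \in V, #|a| == n.-1, #|b'| == n, a \proper b,
          pa != Some a & vpath V n b' (Some a) s']
  end.

(* V-trajectory b0, a_1, b_1, ..., a_r, b_r, ae from the simplex b0 with n
   elements to the simplex ae with n-1 elements; s = [:: (a_i, b_i)] *)
Definition is_traj N (V : {set vpair N}) (n : nat) (b0 : simplex N)
    (s : seq (vpair N)) (ae : simplex N) : bool :=
  [&& #|b0| == n, vpath V n b0 None s, #|ae| == n.-1,
      ae \proper last b0 [seq p.2 | p <- s] &
      last None [seq Some p.1 | p <- s] != Some ae].

Fixpoint traj_weight N (b : simplex N) (s : seq (vpair N)) (ae : simplex N)
    : int :=
  match s with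
  | [::] => incidence b ae
  | (a, b') :: s' => - (incidence b a * incidence b' a) * traj_weight b' s' ae
  end.

(* gradient vector field: no closed trajectory b0, a1, b1, ..., a_r, b_r = b0
   with r > 0 (and b1 <> b0) *)
Definition gradient N (D : {set simplex N}) (V : {set vpair N}) : Prop :=
  is_dvf D V /\
  forall n (b0 : simplex N) (s : seq (vpair N)), #|b0| = n -> vpath V n b0 None s -> s != [::] ->
    last b0 [seq p.2 | p <- s] = b0 -> head b0 [seq p.2 | p <- s] = b0.

(* critical simplex with n elements (dimension n-1) *)
Definition crit N (D : {set simplex N}) (V : {set vpair N}) (n : nat)
    (s : simplex N) : bool :=
  [&& s \in D, #|s| == n, s != set0 &
      [forall p in V, (p.1 != s) && (p.2 != s)] || ((set0, s) \in V)].

(* coefficient of t in the Morse boundary of s (s with n elements, t with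
   n-1 elements) = sum of the weights of all V-trajectories from s to t.
   Trajectories are enumerated up to length #|V|. *)
Definition mcoef N (V : {set vpair N}) (n : nat) (s t : simplex N) : int :=
  \sum_(r < (#|V|).+1)
     \sum_(u : (nat_of_ord r).-tuple (vpair N) | is_traj V n s u t)
        traj_weight s u t.

(* chains: integer functions on simplices; C_{n-1}^V = functions supported on
   critical simplices with n elements *)
Definition chain N := {ffun simplex N -> int}.

Definition inC N (D : {set simplex N}) (V : {set vpair N}) (n : nat)
    (c : chain N) : Prop :=
  forall s, c s != 0 -> crit D V n s.

Definition basis_chain N (t : simplex N) : chain N :=
  [ffun x => if x == t then 1 else 0].

(* q-th co-Morse coboundary delta_q : C_{q-1} -> C_q ((q-1)-simplices have
   q elements, q-simplices have q+1 elements); coefficient of s in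
   delta_q(t) = coefficient of t in the Morse boundary of s *)
Definition cobd N (D : {set simplex N}) (V : {set vpair N}) (q : nat)
    (c : chain N) : chain N :=
  [ffun s => if crit D V q.+1 s then
               \sum_(t | crit D V q t) c t * mcoef V q.+1 s t
             else 0].

Definition cancelW N (V : {set vpair N}) (b0 : simplex N)
    (s : seq (vpair N)) (ae : simplex N) : {set vpair N} :=
  (V :\: [set p in s]) :|:
  [set p in zip ([seq p.1 | p <- s] ++ [:: ae]) (b0 :: [seq p.2 | p <- s])].

(* The coefficient of t in the Morse boundary of an unmatched simplex s is
   sum_x <s : x> flow(t)(x), where the flow towards t collects the weights of
   the trajectories leaving x through its partner.  The flow is the only
   function supported on t and on the matched faces that is killed by the
   boundary of every matched simplex whose face is not t: for an acyclic
   matching this system is triangular with respect to the height.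
   Cancelling the unique trajectory sigma0 -> tau0 only re-pairs (k-1)- with
   k-simplices, so away from degree k nothing changes.  In degree k the
   system of W differs from that of V only at sigma0, now matched, and
   since the trajectory is unique, eps = m_V(sigma0, tau0) = +-1 and
   flow_W(tau) = flow_V(tau) - eps m_V(sigma0, tau) flow_V(tau0).
   W is acyclic because of a height function that places the path above the
   simplices that cannot reach it and below those that can. *)

From mathcomp Require Import all_boot all_order all_algebra.
From mathcomp Require Import ring zify.
Import GRing.Theory Num.Theory.
Set Implicit Arguments. Unset Strict Implicit. Unset Printing Implicit Defensive.
Local Open Scope ring_scope.

Lemma big_tuple0 (T : finType) (R : nmodType) (P : pred (seq T)) (F : seq T -> R) :
  \sum_(u : 0.-tuple T | P u) F u = if P [::] then F [::] else 0.
Proof.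
rewrite big_mkcond (eq_bigr (fun _ => if P [::] then F [::] else 0)).
  by rewrite sumr_const card_tuple expn0.
by move=> u _; rewrite (tuple0 u).
Qed.

Lemma big_tuple_cons (T : finType) (R : nmodType) n (P : pred (seq T)) (F : seq T -> R) :
  \sum_(u : n.+1.-tuple T | P u) F u =
  \sum_(x : T) \sum_(u : n.-tuple T | P (x :: u)) F (x :: u).
Proof.
rewrite pair_big_dep /=.
rewrite (reindex (fun xu : T * n.-tuple T => [tuple of xu.1 :: xu.2])) /=.
  by apply: eq_bigl => -[x u].
exists (fun u : n.+1.-tuple T => (thead u, [tuple of behead u])) => [[x u]|u] _ /=.
  by congr (_, _); apply: val_inj.
by rewrite [in RHS](tuple_eta u).
Qed.

Lemma big_ord_trunc (R : nmodType) (f : nat -> R) h n :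
  (h <= n)%N -> (forall m, (h < m)%N -> f m = 0) ->
  \sum_(m < n.+1) f m = \sum_(m < h.+1) f m.
Proof.
move=> hn f0; rewrite -!(big_mkord xpredT f) (big_cat_nat _ (n := h.+1)) //=.
by rewrite [X in _ + X]big_nat_cond [X in _ + X]big1 ?addr0 // => m /andP[/andP[/f0]].
Qed.

Section Trajectories.
Variable N : nat.
Implicit Types (b c s t x : simplex N) (u : seq (vpair N)) (M : {set vpair N}) (p q : vpair N).

Lemma incidence_neq0 s t : (incidence s t != 0) = (t \subset s) && (#|s| == #|t|.+1)%N.
Proof.
rewrite /incidence; case: ifP => [/andP[sub /eqP sz]|_]; last by rewrite eqxx.
case: pickP => [v _|none]; first by rewrite signr_eq0.
have : s \subset t.
  by apply/subsetP => x xs; move: (none x); rewrite !inE xs andbT => /negbFE.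
by move/subset_leq_card; rewrite sz ltnn.
Qed.

Lemma incidenceP s t :
  reflect (t \proper s /\ #|s| = #|t|.+1) (incidence s t != 0).
Proof.
rewrite incidence_neq0; apply: (iffP andP) => [[sub /eqP sz]|[/proper_sub sub ->]].
  by rewrite properEcard sub sz ltnSn.
by rewrite sub eqxx.
Qed.

Lemma incidence_neq0_card n c t : #|c| = n ->
  (incidence c t != 0) = (#|t| == n.-1)%N && (t \proper c).
Proof.
move=> <-; apply/incidenceP/andP => [[pr ->]|[/eqP tn pr]]; first by rewrite eqxx.
by split=> //; have := proper_card pr; rewrite tn; case: #|c|.
Qed.

Lemma incidence_sqr s t : incidence s t != 0 -> incidence s t * incidence s t = 1.
Proof.
rewrite /incidence; case: ifP => _; last by rewrite eqxx.
by case: pickP => [v _|]; [rewrite -expr2 sqrr_sign | rewrite eqxx].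
Qed.

(* [step M b p] moves from the upper simplex [b] down to the face [p.1] and up
   to its partner [p.2]; excluding [(p.1, b) \in M] is the trajectory
   condition that the face differs from the previous one. *)
Definition step M b p := [&& p \in M, incidence b p.1 != 0 & (p.1, b) \notin M].
Definition endstep M b t := (incidence b t != 0) && ((t, b) \notin M).
Fixpoint walk M b u := if u is p :: u' then step M b p && walk M p.2 u' else true.
Definition walk_end b u := last b [seq p.2 | p <- u].

Lemma walk_cat M b u1 u2 :
  walk M b (u1 ++ u2) = walk M b u1 && walk M (walk_end b u1) u2.
Proof. by elim: u1 b => //= p u1 IH b; rewrite IH andbA. Qed.

Lemma walk_end_cat b u1 u2 : walk_end b (u1 ++ u2) = walk_end (walk_end b u1) u2.
Proof. by rewrite /walk_end map_cat last_cat. Qed.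

Lemma walk_end_take_nth b u i p0 :
  (i < size u)%N -> walk_end b (take i.+1 u) = (nth p0 u i).2.
Proof.
elim: u b i => // p u IH b [|i] /= lt; first by rewrite take0.
by rewrite -(IH p.2 i lt).
Qed.

Lemma walk_nth M b u i p0 : walk M b u -> (i < size u)%N ->
  step M (walk_end b (take i u)) (nth p0 u i).
Proof.
move=> w lt; move: w; rewrite -{1}(cat_take_drop i u) walk_cat (drop_nth p0 lt) /=.
by case/and3P.
Qed.

Definition matching_shape M :=
  forall p, p \in M -> p.1 \proper p.2 /\ #|p.2| = (#|p.1|).+1.
Definition acyclic M := forall b u, u != [::] -> walk M b u -> walk_end b u != b.
Definition lowers M := [set p.1 | p in M].
Definition uppers M := [set p.2 | p in M].

Lemma matched_incidence M p : matching_shape M -> p \in M -> incidence p.2 p.1 != 0.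
Proof. by move=> sh /sh[pr sz]; apply/incidenceP. Qed.

Lemma step_card M b p : matching_shape M -> step M b p -> #|p.2| = #|b|.
Proof.
by move=> sh /and3P[pM /incidenceP[_ ->] _]; have [_ ->] := sh p pM.
Qed.

Lemma walk_end_card M b u : matching_shape M -> walk M b u -> #|walk_end b u| = #|b|.
Proof.
move=> sh; elim: u b => //= p u IH b /andP[st w].
by rewrite -(step_card sh st); apply: IH.
Qed.

Lemma walk_end_upper M b u : b \in uppers M -> walk M b u -> walk_end b u \in uppers M.
Proof.
elim: u b => //= p u IH b _ /andP[/and3P[pM _ _] w].
by apply: IH w; apply/imsetP; exists p.
Qed.

Definition succ M : rel (simplex N) := fun b c => [exists p, step M b p && (p.2 == c)].

Lemma connect_walkP M b c :
  reflect (exists2 u, walk M b u & walk_end b u = c) (connect (succ M) b c).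
Proof.
apply: (iffP connectP) => [[s pth ->]|[u w <-]].
  elim: s b pth => [|c' s IH] b /=; first by exists [::].
  case/andP=> /existsP[p /andP[st /eqP pc]] /IH[u w <-].
  by exists (p :: u); rewrite /walk_end /= ?st pc.
exists [seq p.2 | p <- u] => //.
elim: u b w => //= p u IH b /andP[st w]; rewrite IH // andbT.
by apply/existsP; exists p; rewrite st eqxx.
Qed.

(* On an acyclic [M], the number of simplices reachable by a nonempty walk
   strictly decreases along a walk. *)
Definition reach M b := [set c | [exists p, step M b p && connect (succ M) p.2 c]].
Definition height M b := #|reach M b|.

Lemma reach_uppers M b : reach M b \subset uppers M.
Proof.
apply/subsetP => c; rewrite inE => /existsP[p /andP[st /connect_walkP[u w <-]]].
by apply: walk_end_upper w; case/and3P: st => pM _ _; apply/imsetP; exists p.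
Qed.

Lemma height_le M b : (height M b <= #|M|)%N.
Proof. exact: leq_trans (subset_leq_card (reach_uppers M b)) (leq_imset_card _ _). Qed.

Lemma notin_reach M b : acyclic M -> b \notin reach M b.
Proof.
move=> ac; rewrite inE; apply/existsP => -[p /andP[st /connect_walkP[u w e]]].
by move: (ac b (p :: u) isT); rewrite /= st w => /(_ isT)/eqP; apply.
Qed.

Lemma height_step M b p : acyclic M -> step M b p -> (height M p.2 < height M b)%N.
Proof.
move=> ac st; apply: proper_card; apply/properP; split.
  apply/subsetP => c; rewrite !inE => /existsP[q /andP[stq conn]].
  apply/existsP; exists p; rewrite st (connect_trans _ conn) //.
  by apply: connect1; apply/existsP; exists q; rewrite stq eqxx.
by exists p.2; [rewrite inE; apply/existsP; exists p; rewrite st /= | exact: notin_reach].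
Qed.

Lemma size_walk_le M b u : acyclic M -> walk M b u -> (size u <= height M b)%N.
Proof.
move=> ac; elim: u b => //= p u IH b /andP[st w].
exact: leq_ltn_trans (IH _ w) (height_step ac st).
Qed.

Lemma height_upper_lt M b : acyclic M -> b \in uppers M -> (height M b < #|M|)%N.
Proof.
move=> ac bU; apply: leq_trans (leq_imset_card (fun p : vpair N => p.2) M).
apply: proper_card; apply/properP; split; first exact: reach_uppers.
by exists b => //; apply: notin_reach.
Qed.

End Trajectories.

Section Matching.
Variables (N : nat) (M : {set vpair N}).
Implicit Types (b c s t x : simplex N) (u : seq (vpair N)) (p q : vpair N).
Hypothesis Macyclic : acyclic M.
Hypothesis Mshape : matching_shape M.
Hypothesis Mupper : {in M &, injective snd}.
Hypothesis Mlower : {in M &, injective fst}.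

Definition walk_sum r b t : int :=
  \sum_(u : r.-tuple (vpair N) | walk M b u && endstep M (walk_end b u) t)
     traj_weight b u t.
Definition morse_sum b t := \sum_(r < #|M|.+1) walk_sum r b t.
Definition free_incidence b x : int := if (x, b) \in M then 0 else incidence b x.

(* [flow t x] is the total weight of the trajectories that climb from [x] to
   its partner and then run to [t], plus one if [x = t]. *)
Definition flow t x : int :=
  (if x == t then 1 else 0) +
  \sum_(p in M | p.1 == x) - incidence p.2 x * morse_sum p.2 t.
Definition flow_boundary t b := \sum_x incidence b x * flow t x.

Lemma walk_sum0 b t : walk_sum 0 b t = free_incidence b t.
Proof.
rewrite /walk_sum (big_tuple0 (fun u => walk M b u && endstep M (walk_end b u) t)
                              (fun u => traj_weight b u t)) /walk_end /endstep /free_incidence /=.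
by case: ((t, b) \in M); rewrite ?andbF ?andbT //; case: eqP.
Qed.

Lemma walk_sumS r b t : walk_sum r.+1 b t =
  \sum_p (if step M b p
          then - (incidence b p.1 * incidence p.2 p.1) * walk_sum r p.2 t else 0).
Proof.
rewrite /walk_sum (big_tuple_cons r (fun u => walk M b u && endstep M (walk_end b u) t)
                                   (fun u => traj_weight b u t)); apply: eq_bigr => -[a b'] _ /=.
by case: (step M b (a, b')) => /=; [rewrite big_distrr | rewrite big_pred0].
Qed.

Lemma walk_sum_eq0 r b t : (height M b < r)%N -> walk_sum r b t = 0.
Proof.
move=> lt; rewrite /walk_sum big_pred0 // => u; apply/negbTE/negP => /andP[w _].
by have := size_walk_le Macyclic w; rewrite size_tuple; lia.
Qed.

(* Split every trajectory after its first face. *)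
Lemma morse_sum_flow b t : morse_sum b t = \sum_x free_incidence b x * flow t x.
Proof.
rewrite /morse_sum big_ord_recl walk_sum0.
have -> : \sum_(i < #|M|) walk_sum (bump 0 i) b t =
   \sum_p (if step M b p
           then - (incidence b p.1 * incidence p.2 p.1) * morse_sum p.2 t else 0).
  under eq_bigr do rewrite /bump /= add1n walk_sumS.
  rewrite exchange_big /=; apply: eq_bigr => p _.
  case: ifP => st; last by rewrite big1.
  rewrite -big_distrr /= /morse_sum big_ord_recr /= walk_sum_eq0 ?addr0 //.
  by apply: height_upper_lt => //; apply/imsetP; exists p => //; case/and3P: st.
rewrite /flow; under [RHS]eq_bigr do rewrite mulrDr.
rewrite big_split /=; congr (_ + _).
  by rewrite (bigD1 t) //= eqxx mulr1 big1 ?addr0 // => x /negbTE ->; rewrite mulr0.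
under [RHS]eq_bigr do rewrite big_distrr /=.
rewrite (exchange_big_dep (fun p : vpair N => p \in M)) /=; last by move=> x p _ /andP[].
rewrite [RHS]big_mkcond /=; apply: eq_bigr => p _.
rewrite /step /free_incidence; case pM: (p \in M) => //=.
rewrite (big_pred1 p.1); last by move=> x; rewrite eq_sym.
case: ((p.1, b) \in M); rewrite ?andbF ?mul0r //=.
by case: eqP => [->|_] /=; [rewrite !mul0r | ring].
Qed.

Lemma morse_sum_unmatched s t : (forall x, (x, s) \notin M) ->
  morse_sum s t = flow_boundary t s.
Proof.
move=> ns; rewrite morse_sum_flow; apply: eq_bigr => x _.
by rewrite /free_incidence (negbTE (ns x)).
Qed.

Lemma flow_unmatched t x : x \notin lowers M -> flow t x = if x == t then 1 else 0.
Proof.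
move=> nl; rewrite /flow big_pred0 ?addr0 // => p; apply/negbTE/negP => /andP[pM /eqP e].
by case/negP: nl; apply/imsetP; exists p.
Qed.

(* Both terms of the boundary at a matched simplex come from [morse_sum_flow]:
   the partner's term is minus the free part. *)
Lemma flow_boundary_matched p0 t : p0 \in M -> p0.1 != t -> flow_boundary t p0.2 = 0.
Proof.
move=> p0M ne.
have eB x : incidence p0.2 x =
    free_incidence p0.2 x + (if x == p0.1 then incidence p0.2 p0.1 else 0).
  rewrite /free_incidence; case: eqP => [->|nx].
    by rewrite -surjective_pairing p0M add0r.
  case: ifP => [xM|_]; last by rewrite addr0.
  by case: nx; rewrite -(Mupper xM p0M erefl).
rewrite /flow_boundary; under eq_bigr do rewrite eB mulrDl.
rewrite big_split /= -morse_sum_flow (bigD1 p0.1) //= eqxx big1 ?addr0; last first.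
  by move=> x /negbTE ->; rewrite mul0r.
have -> : flow t p0.1 = - incidence p0.2 p0.1 * morse_sum p0.2 t.
  rewrite /flow (negbTE ne) add0r (big_pred1 p0) //.
  move=> p; apply/andP/eqP => [[pM /eqP e]|->]; first exact: Mlower.
  by rewrite p0M eqxx.
by rewrite mulrA mulrN (incidence_sqr (matched_incidence Mshape p0M)); ring.
Qed.

(* The system "the boundary of phi vanishes at the matched uppers" is
   triangular for the height, so its only solution supported on the lowers
   is zero. *)
Lemma matched_system_eq0 (phi : simplex N -> int) :
  (forall x, x \notin lowers M -> phi x = 0) ->
  (forall p, p \in M -> \sum_x incidence p.2 x * phi x = 0) ->
  forall x, phi x = 0.
Proof.
move=> phi_out phi_eq.
suff phi_low m p : p \in M -> (height M p.2 < m)%N -> phi p.1 = 0.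
  move=> x; have [/imsetP[p pM ->]|] := boolP (x \in lowers M); last exact: phi_out.
  exact: (phi_low (height M p.2).+1).
elim: m p => // m IH p pM lt.
have := phi_eq p pM; rewrite (bigD1 p.1) //= big1 ?addr0.
  by move/eqP; rewrite mulf_eq0 (negbTE (matched_incidence Mshape pM)) => /eqP.
move=> y; have [/imsetP[q qM ->] ny|/phi_out -> _] := boolP (y \in lowers M); last first.
  by rewrite mulr0.
have [->|nz] := eqVneq (incidence p.2 q.1) 0; first by rewrite mul0r.
rewrite (IH q) ?mulr0 //.
have st : step M p.2 q.
  rewrite /step qM nz /=; apply/negP => qpM.
  by move: ny; rewrite -(Mupper qpM pM erefl) /= eqxx.
by have := height_step Macyclic st; lia.
Qed.

Lemma traj_weight_sqr b u t : walk M b u -> endstep M (walk_end b u) t ->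
  traj_weight b u t * traj_weight b u t = 1.
Proof.
elim: u b => [|[a b'] u IH] b /=; first by move=> _ /andP[nz _]; rewrite incidence_sqr.
move=> /andP[/and3P[abM nz _] w] es.
have nz' := matched_incidence Mshape abM; rewrite /= in nz'.
have e := IH _ w es.
set x := incidence b a; set y := incidence b' a; set z := traj_weight b' u t.
have -> : - (x * y) * z * (- (x * y) * z) = (x * x) * (y * y) * (z * z) by ring.
by rewrite e (incidence_sqr nz) (incidence_sqr nz') !mul1r.
Qed.

(* [vpath] carries the previous face, [walk] reads it off the matching. *)
Definition prev_face_ok b (pa : option (simplex N)) :=
  forall x, ((x, b) \in M) = (pa == Some x).

Lemma vpath_walk n b pa u : #|b| = n -> prev_face_ok b pa -> vpath M n b pa u = walk M b u.
Proof.
elim: u b pa => //= -[a b'] u IH b pa bn ok /=.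
rewrite /step /=; case abM: ((a, b') \in M) => //=.
have [pr e] := Mshape abM; rewrite /= in pr e.
rewrite (incidence_neq0_card a bn) -ok.
have [/eqP an|] := boolP (#|a| == n.-1)%N => //=.
have [prb|] := boolP (a \proper b); last by rewrite !andbF.
have n0 : (0 < n)%N by rewrite -bn; apply: leq_ltn_trans (proper_card prb).
rewrite e an prednK // eqxx /=; case: ((a, b) \in M) => //=.
apply: IH => // [|x]; first by rewrite e an prednK.
by apply/idP/idP => [xM|/eqP[<-] //]; have [->] := Mupper xM abM erefl.
Qed.

Lemma walk_prev_face n b pa u : #|b| = n -> prev_face_ok b pa -> walk M b u ->
  prev_face_ok (walk_end b u) (last pa [seq Some p.1 | p <- u]) /\
  #|walk_end b u| = n.
Proof.
elim: u b pa => //= -[a b'] u IH b pa bn ok /andP[st w].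
apply: (IH b' (Some a)) => //; first by rewrite (step_card Mshape st).
move=> x; apply/idP/idP => [xM|/eqP[<-]]; last by case/and3P: st.
by case/and3P: st => abM _ _; have [->] := Mupper xM abM erefl.
Qed.

Lemma is_trajE n s u t : #|s| = n -> (forall x, (x, s) \notin M) ->
  is_traj M n s u t = walk M s u && endstep M (walk_end s u) t.
Proof.
move=> sn ns.
have ok : prev_face_ok s None by move=> x; rewrite (negbTE (ns x)).
rewrite /is_traj sn eqxx /= (vpath_walk u sn ok).
have [w|] := boolP (walk M s u) => //=.
have [ok' cn] := walk_prev_face sn ok w.
by rewrite /endstep (incidence_neq0_card t cn) ok' -andbA.
Qed.

Lemma mcoef_morse_sum n s t : #|s| = n -> (forall x, (x, s) \notin M) ->
  mcoef M n s t = morse_sum s t.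
Proof.
move=> sn ns; apply: eq_bigr => r _.
by apply: eq_bigl => u; rewrite is_trajE.
Qed.

Lemma walk_vpath n b pa u : #|b| = n ->
  (forall x, pa == Some x -> (x, b) \in M) -> walk M b u -> vpath M n b pa u.
Proof.
elim: u b pa => //= -[a b'] u IH b pa bn ok /andP[st w].
have sz := step_card Mshape st; case/and3P: st => /= abM inz nM.
move: (inz); rewrite (incidence_neq0_card a bn) => /andP[-> ->].
rewrite abM /= sz bn eqxx /=; apply/andP; split.
  by apply/negP => /ok; rewrite (negbTE nM).
by apply: IH w => [|x /eqP[<-]]; rewrite ?sz.
Qed.

End Matching.

Section Critical.
Variables (N : nat) (D : {set simplex N}).
Implicit Types (s t : simplex N) (M : {set vpair N}) (p : vpair N).

Lemma critP M q s : reflect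
  [/\ s \in D, #|s| = q, s != set0 &
      (forall p, p \in M -> (p.1 != s) && (p.2 != s)) \/ (set0, s) \in M]
  (crit D M q s).
Proof.
apply: (iffP and4P) => [[sD /eqP sq ne H]|[sD sq ne H]].
  by split=> //; case/orP: H => [/forall_inP|]; [left | right].
split=> //; first exact/eqP.
by case: H => [H|->]; rewrite ?orbT //; apply/orP; left; apply/forall_inP.
Qed.

Lemma crit_gt0 M q t : crit D M q t -> (0 < q)%N.
Proof. by case/critP => _ <- ne _; rewrite card_gt0. Qed.

(* Only a vertex can be matched with the empty simplex. *)
Lemma crit_card_ge2 M q s : matching_shape M -> (2 <= #|s|)%N ->
  crit D M q s =
  [&& s \in D, #|s| == q, s != set0 & [forall p in M, (p.1 != s) && (p.2 != s)]].
Proof.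
move=> sh s2; rewrite /crit; congr [&& _, _, _ & _].
have [sM|] := boolP ((set0, s) \in M); last by rewrite orbF.
by have [_ /= e] := sh _ sM; move: s2; rewrite e cards0.
Qed.

Lemma crit_not_upper M q s : matching_shape M -> crit D M q s -> (2 <= q)%N ->
  forall x, (x, s) \notin M.
Proof.
move=> sh cr q2; have s2 : (2 <= #|s|)%N by case/critP: cr => _ ->.
move: cr; rewrite (crit_card_ge2 _ sh s2) => /and4P[_ _ _ /forall_inP H] x.
by apply/negP => /H /andP[_]; rewrite eqxx.
Qed.

Lemma dvf_shape M : is_dvf D M -> matching_shape M.
Proof. by move=> dvf p /(dvf.1 p)[]. Qed.

Lemma dvf_upper_inj M : is_dvf D M -> {in M &, injective snd}.
Proof. by move=> dvf p q pM qM e; apply: (dvf.2 p q p.2); rewrite ?eqxx ?orbT // e eqxx orbT. Qed.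

Lemma dvf_lower_inj M : is_dvf D M -> {in M &, injective fst}.
Proof. by move=> dvf p q pM qM e; apply: (dvf.2 p q p.1); rewrite ?eqxx // e eqxx. Qed.

Lemma crit_not_lower M q t : is_dvf D M -> crit D M q t -> forall p, p \in M -> p.1 != t.
Proof.
move=> dvf /critP[_ _ ne [H p pM|sM p pM]]; first by case/andP: (H p pM).
apply/eqP => e; have ep : p = (set0, t) by apply: (dvf.2 _ _ t pM sM); rewrite ?e eqxx ?orbT.
by move: ne; rewrite -{1}e ep eqxx.
Qed.

Lemma sum_basis_chain (C : pred (simplex N)) (F : simplex N -> int) t : C t ->
  \sum_(x | C x) basis_chain t x * F x = F t.
Proof.
move=> Ct; rewrite (bigD1 t) //= ffunE eqxx mul1r big1 ?addr0 // => x /andP[_ nx].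
by rewrite ffunE (negbTE nx) mul0r.
Qed.

Lemma gradient_acyclic M : gradient D M -> acyclic M.
Proof.
move=> [dvf gr] b u ne w; apply/eqP => e.
have vp : vpath M #|b| b None u by apply: (walk_vpath (dvf_shape dvf) erefl _ w).
have := gr #|b| b u erefl vp ne e.
case: u ne w {vp e} => //= p u _ /andP[/and3P[pM _ nM] _] /= e.
by move: nM; rewrite -e -surjective_pairing pM.
Qed.

End Critical.

Section Cancellation.
Variables (N k : nat) (D : {set simplex N}) (V : {set vpair N}).
Variables (sigma0 tau0 : simplex N) (P : seq (vpair N)).
Hypotheses (V_gradient : gradient D V) (k_gt0 : (0 < k)%N).
Hypotheses (sigma0_crit : crit D V k.+1 sigma0) (tau0_crit : crit D V k tau0).
Hypothesis P_traj : is_traj V k.+1 sigma0 P tau0.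
Hypothesis P_unique : forall P', is_traj V k.+1 sigma0 P' tau0 -> P' = P.
Implicit Types (b c s t x : simplex N) (u : seq (vpair N)) (p q : vpair N).

Local Notation W := (cancelW V sigma0 P tau0).
Local Notation r := (size P).

Let V_dvf := V_gradient.1.
Let V_shape := dvf_shape V_dvf.
Let V_upper_inj := dvf_upper_inj V_dvf.
Let V_lower_inj := dvf_lower_inj V_dvf.
Let V_acyclic := gradient_acyclic V_gradient.
Let p0 : vpair N := (set0, set0).

Lemma card_sigma0 : #|sigma0| = k.+1.
Proof. by case/critP: sigma0_crit. Qed.

Lemma sigma0_not_upper x : (x, sigma0) \notin V.
Proof. by apply: crit_not_upper V_shape sigma0_crit _ x; rewrite ltnS. Qed.

Lemma P_walk : walk V sigma0 P && endstep V (walk_end sigma0 P) tau0.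
Proof. by rewrite -(is_trajE V_shape V_upper_inj _ _ card_sigma0 sigma0_not_upper). Qed.

(* [P] is sigma0 = beta 0, alpha 0, beta 1, ..., alpha (r-1), beta r, alpha r = tau0;
   [alpha l] is the paper's alpha_(l+1). *)
Definition beta l := walk_end sigma0 (take l P).
Definition alpha l := nth tau0 [seq p.1 | p <- P] l.

Lemma nth_P l : (l < r)%N -> nth p0 P l = (alpha l, beta l.+1).
Proof.
move=> lt; rewrite /alpha /beta (nth_map p0) // (walk_end_take_nth _ p0) //.
by rewrite -surjective_pairing.
Qed.

Lemma alpha_r : alpha r = tau0.
Proof. by rewrite /alpha nth_default // size_map. Qed.

Lemma beta_r : beta r = walk_end sigma0 P.
Proof. by rewrite /beta take_size. Qed.

Lemma beta0 : beta 0 = sigma0.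
Proof. by rewrite /beta take0. Qed.

Lemma walk_take_P l : walk V sigma0 (take l P).
Proof.
by case/andP: P_walk; rewrite -{1}(cat_take_drop l P) walk_cat => /andP[].
Qed.

Lemma walk_drop_P l : walk V (beta l) (drop l P).
Proof.
by case/andP: P_walk; rewrite -{1}(cat_take_drop l P) walk_cat => /andP[].
Qed.

Lemma walk_end_drop_P l : walk_end (beta l) (drop l P) = beta r.
Proof. by rewrite /beta -walk_end_cat cat_take_drop take_size. Qed.

Lemma step_beta l : (l < r)%N -> step V (beta l) (alpha l, beta l.+1).
Proof. by move=> lt; rewrite -nth_P //; apply: walk_nth lt; case/andP: P_walk. Qed.

Lemma path_pair_V l : (l < r)%N -> (alpha l, beta l.+1) \in V.
Proof. by case/step_beta/and3P. Qed.

Lemma endstep_beta_alpha l : (l <= r)%N -> endstep V (beta l) (alpha l).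
Proof.
rewrite leq_eqVlt => /orP[/eqP->|lt]; first by rewrite alpha_r beta_r; case/andP: P_walk.
by case/and3P: (step_beta lt) => _ /= ? ?; apply/andP.
Qed.

Lemma card_beta l : #|beta l| = k.+1.
Proof. by rewrite /beta (walk_end_card V_shape (walk_take_P l)) card_sigma0. Qed.

Lemma card_alpha l : (l <= r)%N -> #|alpha l| = k.
Proof.
by case/endstep_beta_alpha/andP => /incidenceP[_]; rewrite card_beta => -[].
Qed.

Lemma beta_inj i j : (i <= r)%N -> (j <= r)%N -> beta i = beta j -> i = j.
Proof.
wlog ltij : i j / (i < j)%N.
  move=> H ir jr e; case: (ltngtP i j) => [ij|ji|//]; first exact: H.
  by apply/esym/H.
move=> ir jr e; exfalso.
set u := take (j - i) (drop i P).
have w : walk V (beta i) u.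
  by move: (walk_drop_P i); rewrite -{1}(cat_take_drop (j - i) (drop i P)) walk_cat => /andP[].
have eu : walk_end (beta i) u = beta j.
  by rewrite /beta -walk_end_cat /u -takeD; congr walk_end; congr take; lia.
have ne : u != [::].
  rewrite -size_eq0 /u size_take size_drop; case: ltnP => _; rewrite -lt0n subn_gt0 //.
  exact: leq_trans ltij jr.
by move: (V_acyclic ne w); rewrite eu e eqxx.
Qed.

Lemma alpha_inj i j : (i <= r)%N -> (j <= r)%N -> alpha i = alpha j -> i = j.
Proof.
wlog ltij : i j / (i < j)%N.
  move=> H ir jr e; case: (ltngtP i j) => [ij|ji|//]; first exact: H.
  by apply/esym/H.
move=> ir jr e; exfalso.
have ir' : (i < r)%N by lia.
have [jr'|je] : (j < r)%N \/ j = r by lia.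
  case: (V_lower_inj (path_pair_V ir') (path_pair_V jr') e) => _ e'.
  by have := @beta_inj i.+1 j.+1 ir' jr' e'; lia.
by move: (crit_not_lower V_dvf tau0_crit (path_pair_V ir')); rewrite /= e je alpha_r eqxx.
Qed.

Definition alphas := [seq p.1 | p <- P] ++ [:: tau0].
Definition betas := sigma0 :: [seq p.2 | p <- P].

Lemma nth_alphas l : (l <= r)%N -> nth tau0 alphas l = alpha l.
Proof.
move=> le; rewrite /alphas nth_cat size_map; case: ltnP => // h.
have -> : l = r by lia.
by rewrite subnn alpha_r.
Qed.

Lemma nth_betas l : (l <= r)%N -> nth sigma0 betas l = beta l.
Proof.
case: l => [|l] le; first by rewrite beta0.
by rewrite /betas /= (nth_map p0) ?nth_P.
Qed.

Lemma size_alphas : size alphas = r.+1.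
Proof. by rewrite size_cat size_map addn1. Qed.

Lemma size_betas : size betas = r.+1.
Proof. by rewrite /= size_map. Qed.

Lemma new_pairP p :
  reflect (exists2 l, (l <= r)%N & p = (alpha l, beta l)) (p \in zip alphas betas).
Proof.
apply: (iffP (nthP (tau0, sigma0))).
  move=> [l]; rewrite size_zip size_alphas size_betas minnn ltnS => le <-.
  by exists l => //; rewrite nth_zip ?size_alphas ?size_betas // nth_alphas // nth_betas.
move=> [l le ->]; exists l; first by rewrite size_zip size_alphas size_betas minnn.
by rewrite nth_zip ?size_alphas ?size_betas // nth_alphas // nth_betas.
Qed.

Lemma mem_PP p : reflect (exists2 l, (l < r)%N & p = (alpha l, beta l.+1)) (p \in P).
Proof.
apply: (iffP (nthP p0)) => -[l lt e]; exists l => //; first by rewrite -e nth_P.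
by rewrite e nth_P.
Qed.

Lemma in_W p : (p \in W) = (p \in V) && (p \notin P) || (p \in zip alphas betas).
Proof. by rewrite /cancelW !inE andbC. Qed.

Lemma new_pair_W l : (l <= r)%N -> (alpha l, beta l) \in W.
Proof. by move=> le; rewrite in_W; apply/orP; right; apply/new_pairP; exists l. Qed.

Lemma old_upper_neq p : p \in V -> p \notin P -> forall l, (l <= r)%N -> p.2 != beta l.
Proof.
move=> pV pP [|l] le.
  by rewrite beta0; apply/eqP => e; move: (sigma0_not_upper p.1); rewrite -e -surjective_pairing pV.
apply/eqP => e; have ep := V_upper_inj pV (path_pair_V le) e.
by move: pP; rewrite ep; case/negP; apply/mem_PP; exists l.
Qed.

Lemma old_lower_neq p : p \in V -> p \notin P -> forall l, (l <= r)%N -> p.1 != alpha l.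
Proof.
move=> pV pP l le; apply/eqP => e.
have [lt|le'] := ltnP l r.
  have ep := V_lower_inj pV (path_pair_V lt) e.
  by move: pP; rewrite ep; case/negP; apply/mem_PP; exists l.
have lr : l = r by lia.
by move: (crit_not_lower V_dvf tau0_crit pV); rewrite e lr alpha_r eqxx.
Qed.

Lemma W_shape : matching_shape W.
Proof.
move=> p; rewrite in_W => /orP[/andP[pV _]|/new_pairP[l le ->]]; first exact: V_shape.
by case/andP: (endstep_beta_alpha le) => /incidenceP.
Qed.

Lemma W_upper_inj : {in W &, injective snd}.
Proof.
move=> p q; rewrite !in_W.
move=> /orP[/andP[pV pP]|/new_pairP[l le ->]] /orP[/andP[qV qP]|/new_pairP[l' le' ->]] /= e.
- exact: V_upper_inj.
- by move: (old_upper_neq pV pP le'); rewrite e eqxx.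
- by move: (old_upper_neq qV qP le); rewrite e eqxx.
- by rewrite (beta_inj le le' e).
Qed.

Lemma W_lower_inj : {in W &, injective fst}.
Proof.
move=> p q; rewrite !in_W.
move=> /orP[/andP[pV pP]|/new_pairP[l le ->]] /orP[/andP[qV qP]|/new_pairP[l' le' ->]] /= e.
- exact: V_lower_inj.
- by move: (old_lower_neq pV pP le'); rewrite e eqxx.
- by move: (old_lower_neq qV qP le); rewrite e eqxx.
- by rewrite (alpha_inj le le' e).
Qed.

Lemma W_partner_beta l x : (l <= r)%N -> ((x, beta l) \in W) = (x == alpha l).
Proof.
move=> le; apply/idP/eqP => [xW|->]; last exact: new_pair_W.
by case: (W_upper_inj xW (new_pair_W le) erefl).
Qed.

Lemma V_partner_beta l x : (0 < l <= r)%N -> ((x, beta l) \in V) = (x == alpha l.-1).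
Proof.
move=> /andP[l0 le]; have lt : (l.-1 < r)%N by lia.
have := path_pair_V lt; rewrite prednK // => pv.
by apply/idP/eqP => [xV|->//]; case: (V_upper_inj xV pv erefl).
Qed.

Lemma betasP b : b \in betas -> (index b betas <= r)%N /\ beta (index b betas) = b.
Proof.
move=> mem; have lt : (index b betas <= r)%N by rewrite -ltnS -size_betas index_mem.
by split=> //; rewrite -nth_betas // nth_index.
Qed.

Lemma beta_in_betas l : (l <= r)%N -> beta l \in betas.
Proof. by move=> le; rewrite -nth_betas // mem_nth // size_betas. Qed.

Lemma index_beta l : (l <= r)%N -> index (beta l) betas = l.
Proof.
move=> le; have [lt e] := betasP (beta_in_betas le).
exact: beta_inj.
Qed.

Lemma W_partner_off_path b x : b \notin betas -> ((x, b) \in W) = ((x, b) \in V).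
Proof.
move=> nb; rewrite in_W; apply/idP/idP.
  case/orP => [/andP[]//|/new_pairP[l le [_ e]]].
  by move: nb; rewrite e beta_in_betas.
move=> xV; rewrite xV /=; apply/orP; left; apply/mem_PP => -[l lt [_ e]].
by move: nb; rewrite e beta_in_betas.
Qed.

Lemma suffix_walk l c : (l <= r)%N -> endstep V c (alpha l) ->
  walk V c (drop l P) && endstep V (walk_end c (drop l P)) tau0.
Proof.
move=> le es; have [lt|ge] := ltnP l r; last first.
  have lr : l = r by lia.
  by move: es; rewrite lr alpha_r drop_oversize.
rewrite (drop_nth p0 lt) nth_P //= /step path_pair_V //=.
case/andP: es => -> -> /=; rewrite walk_drop_P /=.
by case/andP: P_walk => _; rewrite -beta_r -(walk_end_drop_P l.+1).
Qed.

(* Any V-walk from [beta m] to a face [alpha l] gives a trajectory from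
   sigma0 to tau0, so it is the corresponding piece of [P]. *)
Lemma splice_P m u l : (m <= r)%N -> (l <= r)%N -> walk V (beta m) u ->
  endstep V (walk_end (beta m) u) (alpha l) -> take m P ++ u ++ drop l P = P.
Proof.
move=> mr lr w es; apply: P_unique.
rewrite (is_trajE V_shape V_upper_inj _ _ card_sigma0 sigma0_not_upper).
rewrite !walk_cat walk_take_P -/(beta m) w /= !walk_end_cat -/(beta m).
exact: suffix_walk.
Qed.

Lemma no_detour m p u l : (m <= r)%N -> (l <= r)%N -> p \notin P ->
  walk V (beta m) (p :: u) -> ~~ endstep V (walk_end (beta m) (p :: u)) (alpha l).
Proof.
move=> mr lr pP w; apply/negP => es; have := splice_P mr lr w es => e.
by move: pP; rewrite -e !mem_cat inE eqxx orbT.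
Qed.

Lemma no_shortcut m l : (m <= r)%N -> (l <= r)%N -> l != m ->
  ~~ endstep V (beta m) (alpha l).
Proof.
move=> mr lr ne; apply/negP => es; have := splice_P mr lr (erefl : walk V (beta m) [::]) es.
move/(congr1 size); rewrite /= size_cat size_take size_drop.
by case: ltnP => h; move/eqP: ne; lia.
Qed.

Definition reaches_path b :=
  [exists c, connect (succ V) b c && [exists l : 'I_r.+1, endstep V c (alpha l)]].

Lemma reaches_pathP b : reflect
  (exists u l, [/\ walk V b u, (l <= r)%N & endstep V (walk_end b u) (alpha l)])
  (reaches_path b).
Proof.
apply: (iffP existsP) => [[c /andP[/connect_walkP[u w <-] /existsP[l es]]]|[u [l [w le es]]]].
  by exists u, l; rewrite -ltnS ltn_ord.
exists (walk_end b u); apply/andP; split; first by apply/connect_walkP; exists u.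
by apply/existsP; exists (Ordinal (le : l < r.+1)%N).
Qed.

(* The path simplices [beta l] sit in the middle, ordered by [l]; simplices
   whose V-walks can reach the path lie above them, all others keep their
   V-height below them.  Uniqueness of [P] rules out the W-steps that would
   climb. *)
Definition path_height := (#|V| + r).+1.
Definition W_height b :=
  (if b \in betas then path_height + index b betas
   else if reaches_path b then path_height + path_height + height V b
   else height V b)%N.

Lemma W_height_old_step b p : p \in V -> p \notin P -> step W b p ->
  (W_height p.2 < W_height b)%N.
Proof.
move=> pV pP /and3P[_ inz nW]; have hV := height_le V.
have p2bs : p.2 \notin betas.
  by apply/negP => /betasP[le e]; move: (old_upper_neq pV pP le); rewrite e eqxx.
rewrite /W_height (negbTE p2bs).
have [bbs|nbs] := boolP (b \in betas).
  have [mr eb] := betasP bbs; set m := index b betas in mr eb *.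
  have stV : step V b p.
    rewrite /step pV inz /=; apply/negP => pbV.
    have [m0|m0] := posnP m.
      by move: pbV; rewrite -eb m0 beta0 (negbTE (sigma0_not_upper _)).
    move: pbV; rewrite -eb V_partner_beta ?m0 // => /eqP e1.
    by move: (old_lower_neq pV pP (leq_trans (leq_pred m) mr)); rewrite e1 eqxx.
  have [/reaches_pathP[u [l [w lr es]]]|_] := boolP (reaches_path p.2).
    by have := no_detour mr lr pP (u := u); rewrite /= eb stV w es => /(_ isT).
  by rewrite ltn_addr // /path_height ltnS (leq_trans (hV p.2)) // leq_addr.
have stV : step V b p by rewrite /step pV inz /= -W_partner_off_path.
have lt := height_step V_acyclic stV.
have [rp|nrp] := boolP (reaches_path p.2); have [rb|nrb] := boolP (reaches_path b).
- by rewrite ltn_add2l.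
- case/reaches_pathP: rp => u [l [w lr es]]; case/reaches_pathP: nrb.
  by exists (p :: u), l; split=> //=; rewrite stV.
- by rewrite (leq_trans lt) // leq_addl.
- by [].
Qed.

Lemma W_height_new_step b l : (l <= r)%N -> step W b (alpha l, beta l) ->
  (W_height (beta l) < W_height b)%N.
Proof.
move=> le /and3P[_ /= inz nW]; rewrite /W_height beta_in_betas // index_beta //.
have [bbs|nbs] := boolP (b \in betas).
  have [mr eb] := betasP bbs; set m := index b betas in mr eb *.
  have lm : l != m by apply/eqP => lm; move: nW; rewrite -eb -lm W_partner_beta // eqxx.
  have [lm1|lm1] := eqVneq l m.-1.
    have m0 : (0 < m)%N by move: lm; rewrite lm1; case: (m) => //=; rewrite eqxx.
    by rewrite lm1 ltn_add2l ltn_predL.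
  have := no_shortcut mr le lm; rewrite eb /endstep inz /=; apply: contraNT => _.
  have [m0|m0] := posnP m; first by rewrite -eb m0 beta0 sigma0_not_upper.
  rewrite -eb V_partner_beta ?m0 //; apply/negP => /eqP e.
  by move: lm1; rewrite (alpha_inj le _ e) ?eqxx // (leq_trans (leq_pred m) mr).
have [rb|/reaches_pathP nrb] := boolP (reaches_path b).
  rewrite /path_height -addnA ltn_add2l; apply: leq_trans (leq_addr _ _).
  by rewrite ltnS (leq_trans le) // leq_addl.
exfalso; apply: nrb; exists [::], l; split=> //.
by rewrite /endstep /walk_end /= inz /= -W_partner_off_path ?nbs.
Qed.

Lemma W_acyclic : acyclic W.
Proof.
have step_lt b p : step W b p -> (W_height p.2 < W_height b)%N.
  move=> st; case/and3P: (st); rewrite in_W => /orP[/andP[pV pP]|/new_pairP[l le ep]] _ _.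
    exact: W_height_old_step.
  by rewrite ep; apply: W_height_new_step; rewrite -?ep.
suff walk_lt u b : u != [::] -> walk W b u -> (W_height (walk_end b u) < W_height b)%N.
  by move=> b u ne w; apply/eqP => e; have := walk_lt u b ne w; rewrite e ltnn.
elim: u b => // p [|p' u] IH b _ /= /andP[st w]; first exact: step_lt.
exact: ltn_trans (IH p.2 isT w) (step_lt _ _ st).
Qed.

Lemma W_changed_card p : (p \in W) != (p \in V) -> #|p.1| = k /\ #|p.2| = k.+1.
Proof.
move=> ne; have [/mem_PP[l lt ->]|pP] := boolP (p \in P).
  by rewrite card_alpha ?card_beta // ltnW.
have : p \in zip alphas betas.
  by move: ne; rewrite in_W pP andbT; case: (p \in V); case: (p \in zip alphas betas).
by case/new_pairP => l le ->; rewrite card_alpha ?card_beta.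
Qed.

Lemma in_W_off_level p : (#|p.1| != k) || (#|p.2| != k.+1) -> (p \in W) = (p \in V).
Proof.
move=> h; apply/eqP; apply/negP => /negP/W_changed_card[e1 e2].
by move: h; rewrite e1 e2 !eqxx.
Qed.

Lemma crit_W_off_level (q : nat) s : q != k -> q != k.+1 -> crit D W q s = crit D V q s.
Proof.
move=> qk qk1.
have same p : (#|p.1| == q) || (#|p.2| == q) -> (p \in W) = (p \in V).
  by move=> h; apply: in_W_off_level; case/orP: h => /eqP ->; rewrite ?qk ?qk1 ?orbT.
rewrite /crit; have [/eqP sq|] := boolP (#|s| == q); last by rewrite !andbF.
congr (_ && (_ && (_ && (_ || _)))).
  apply: eq_forallb => p; have [hp|hp] := boolP ((p.1 != s) && (p.2 != s)).
    by rewrite !implybT.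
  rewrite !implybF; congr negb; apply: same.
  move: hp; rewrite negb_and !negbK => hp.
  by case/orP: hp => /eqP ->; rewrite sq eqxx ?orbT.
by apply: in_W_off_level; rewrite /= cards0 eq_sym -lt0n k_gt0.
Qed.

Lemma crit_W_upper_level s : crit D W k.+1 s = crit D V k.+1 s && (s != sigma0).
Proof.
have [/eqP sz|ns] := boolP (#|s| == k.+1)%N; last by rewrite /crit (negbTE ns) !andbF.
have s2 : (2 <= #|s|)%N by rewrite sz ltnS.
rewrite (crit_card_ge2 D _ W_shape s2) (crit_card_ge2 D _ V_shape s2) -!andbA.
congr [&& _, _, _ & _].
apply/idP/andP => [/forall_inP H|[/forall_inP H ns]].
  split; last by apply/eqP => e; have := H _ (new_pair_W (leq0n r)); rewrite beta0 e eqxx andbF.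
  apply/forall_inP => p pV; have [/mem_PP[l lt ep]|pP] := boolP (p \in P).
    rewrite ep /=; apply/andP; split; apply/eqP => e.
      by move: (card_alpha (ltnW lt)); rewrite e sz; lia.
    by have := H _ (new_pair_W lt); rewrite e eqxx andbF.
  by apply: H; rewrite in_W pV pP.
apply/forall_inP => p; rewrite in_W => /orP[/andP[pV _]|/new_pairP[l le ->]]; first exact: H.
apply/andP; split => /=; apply/eqP => e; first by move: (card_alpha le); rewrite e sz; lia.
have [l0|l0] := posnP l; first by move: ns; rewrite -e l0 beta0 eqxx.
have lt : (l.-1 < r)%N by lia.
by have := H _ (path_pair_V lt); rewrite prednK // e eqxx andbF.
Qed.

Lemma crit_W_lower t : crit D V k t -> t != tau0 -> crit D W k t.
Proof.
move=> /critP[tD tk ne H] nt; apply/critP; split=> //.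
case: H => [H|H]; last by right; rewrite in_W_off_level //= cards0 eq_sym -lt0n k_gt0.
left => p; rewrite in_W => /orP[/andP[pV _]|/new_pairP[l le ->]]; first exact: H.
apply/andP; split => /=; apply/eqP => e; last by move: (card_beta l); rewrite e tk; lia.
have [lt|ge] := ltnP l r; first by have := H _ (path_pair_V lt); rewrite /= e eqxx.
by move: nt; rewrite -e (_ : l = r) ?alpha_r ?eqxx //; lia.
Qed.

Lemma crit_W_lower_level t : (2 <= k)%N -> crit D W k t = crit D V k t && (t != tau0).
Proof.
move=> k2; have [->|nt] := eqVneq t tau0.
  rewrite andbF; apply/negbTE/negP => /critP[_ _ _ [H|H]].
    by have := H _ (new_pair_W (leqnn r)); rewrite alpha_r eqxx.
  by have [_ /= e] := W_shape H; move: k2; case/critP: tau0_crit => _ <- _ _; rewrite e cards0.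
rewrite andbT; apply/idP/idP => [|/crit_W_lower]; last exact.
move=> /critP[tD tk ne H]; apply/critP; split=> //; left.
have {}H : forall p, p \in W -> (p.1 != t) && (p.2 != t).
  by case: H => // H; have [_ /= e] := W_shape H; move: k2; rewrite -tk e cards0.
move=> p pV; have [/mem_PP[l lt ep]|pP] := boolP (p \in P); last by apply: H; rewrite in_W pV pP.
rewrite ep /=; apply/andP; split; first by case/andP: (H _ (new_pair_W (ltnW lt))).
by apply/eqP => e; move: (card_beta l.+1); rewrite e tk; lia.
Qed.

Lemma vpath_W_off_level n b pa u : n != k.+1 -> vpath W n b pa u = vpath V n b pa u.
Proof.
move=> nk; elim: u b pa => //= -[a b'] u IH b pa; rewrite IH.
have [e|] := eqVneq #|b'| n; last by rewrite !andbF.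
by rewrite (in_W_off_level (p := (a, b'))) //= e nk orbT.
Qed.

Lemma height_V_le_W s : #|s| != k.+1 -> (height V s <= #|W|)%N.
Proof.
move=> nk; apply: leq_trans (leq_imset_card (fun p : vpair N => p.2) W).
apply: subset_leq_card; apply/subsetP => c cR.
have /imsetP[p pV ep] := subsetP (reach_uppers V s) c cR.
apply/imsetP; exists p => //; rewrite in_W_off_level // -ep.
move: cR; rewrite inE => /existsP[q /andP[st /connect_walkP[u w <-]]].
by rewrite (walk_end_card V_shape w) (step_card V_shape st) nk orbT.
Qed.

Lemma mcoef_W_off_level n s t : n != k.+1 -> #|s| = n -> (forall x, (x, s) \notin V) ->
  mcoef W n s t = mcoef V n s t.
Proof.
move=> nk sn ns; rewrite /mcoef.
set f := fun r : nat =>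
  \sum_(u : r.-tuple (vpair N) | is_traj V n s u t) traj_weight s u t.
have f0 m : (height V s < m)%N -> f m = 0.
  move=> lt; rewrite /f big_pred0 // => u; apply/negbTE/negP.
  rewrite (is_trajE V_shape V_upper_inj _ _ sn ns) => /andP[w _].
  by have := size_walk_le V_acyclic w; rewrite size_tuple; lia.
under eq_bigr do under eq_bigl do rewrite /is_traj vpath_W_off_level //.
rewrite -/(\sum_(m < #|V|.+1) f m) (big_ord_trunc (height_V_le_W _) f0) ?sn //.
by rewrite (big_ord_trunc (height_le V s) f0).
Qed.

Definition eps := mcoef V k.+1 sigma0 tau0.

Lemma eps_weight : eps = traj_weight sigma0 P tau0.
Proof.
have sizeP : (size P < #|V|.+1)%N.
  rewrite ltnS; apply: leq_trans (height_le V sigma0) ; apply: size_walk_le V_acyclic _.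
  by case/andP: P_walk.
have inner m : \sum_(u : m.-tuple (vpair N) | is_traj V k.+1 sigma0 u tau0)
    traj_weight sigma0 u tau0 = if m == size P then traj_weight sigma0 P tau0 else 0.
  case: eqP => [e|ne].
    have sz : size P == m by rewrite e.
    rewrite (big_pred1 (Tuple sz)) // => u; apply/idP/eqP => [/P_unique ep|->//].
    by apply: val_inj; rewrite /= ep.
  rewrite big_pred0 // => u; apply/negbTE/negP => /P_unique ep.
  by apply: ne; rewrite -ep size_tuple.
rewrite /eps /mcoef; under eq_bigr do rewrite inner.
rewrite (bigD1 (Ordinal sizeP)) //= eqxx.
by rewrite big1 ?addr0 // => i ne; case: eqP => // e; case/eqP: ne; apply: val_inj.
Qed.

Lemma eps_sqr : eps * eps = 1.
Proof.
by rewrite eps_weight; case/andP: P_walk => w es; move: (traj_weight_sqr V_shape w es).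
Qed.

Lemma lowers_V_W x : x \in lowers V -> x \in lowers W.
Proof.
case/imsetP => p pV ->; have [/mem_PP[l lt ->]|pP] := boolP (p \in P).
  by apply/imsetP; exists (alpha l, beta l) => //; exact: new_pair_W (ltnW lt).
by apply/imsetP; exists p => //; rewrite in_W pV pP.
Qed.

Lemma tau0_lower_W : tau0 \in lowers W.
Proof. by apply/imsetP; exists (alpha r, beta r); [exact: new_pair_W | rewrite alpha_r]. Qed.

Lemma crit_not_lower_W t : crit D V k t -> t != tau0 -> t \notin lowers W.
Proof.
move=> ct nt; apply/negP => /imsetP[p].
rewrite in_W => /orP[/andP[pV _]|/new_pairP[l le ->]] e.
  by move: (crit_not_lower V_dvf ct pV); rewrite e eqxx.
have [lt|ge] := ltnP l r.
  by move: (crit_not_lower V_dvf ct (path_pair_V lt)); rewrite /= e eqxx.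
by move: nt; rewrite e /= (_ : l = r) ?alpha_r ?eqxx //; lia.
Qed.

Lemma flow_boundary_sigma0 t : flow_boundary V t sigma0 = mcoef V k.+1 sigma0 t.
Proof.
rewrite (mcoef_morse_sum V_shape V_upper_inj _ card_sigma0 sigma0_not_upper).
by rewrite (morse_sum_unmatched V_acyclic _ sigma0_not_upper).
Qed.

Lemma upper_W p : p \in W -> (exists2 q, q \in V & q.2 = p.2) \/ p.2 = sigma0.
Proof.
rewrite in_W => /orP[/andP[pV _]|/new_pairP[l le ->]]; first by left; exists p.
have [->|l0] := posnP l; first by right; rewrite beta0.
left; exists (alpha l.-1, beta l.-1.+1); first by apply: path_pair_V; lia.
by rewrite prednK.
Qed.

(* The flow towards tau in W is obtained from V's by subtracting a multiple
   of the flow towards tau0: both sides solve W's triangular system, the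
   only new equation (at sigma0) fixing the multiple. *)
Lemma flow_W t : crit D V k t -> t != tau0 ->
  flow W t =1 (fun x => flow V t x - eps * mcoef V k.+1 sigma0 t * flow V tau0 x).
Proof.
move=> ct nt; set lam := eps * mcoef V k.+1 sigma0 t.
pose phi x := flow W t x - flow V t x + lam * flow V tau0 x.
have t_nlW := crit_not_lower_W ct nt.
have t_nlV : t \notin lowers V by apply: contra t_nlW; apply: lowers_V_W.
have tau0_nlV : tau0 \notin lowers V.
  by apply/negP => /imsetP[q qV e]; move: (crit_not_lower V_dvf tau0_crit qV); rewrite -e eqxx.
have V_bdry t' q : t' \notin lowers V -> q \in V -> flow_boundary V t' q.2 = 0.
  move=> nl qV; apply: (flow_boundary_matched V_acyclic V_shape V_upper_inj V_lower_inj qV).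
  by apply: contra nl => /eqP <-; apply/imsetP; exists q.
suff phi0 x : phi x = 0.
  by move=> x /=; apply/eqP; rewrite -subr_eq0 -(phi0 x) /phi; apply/eqP; ring.
apply: (matched_system_eq0 W_acyclic W_shape W_upper_inj) => {x} [x nl|p pW].
  have nlV : x \notin lowers V by apply: contra nl; apply: lowers_V_W.
  rewrite /phi !flow_unmatched //.
  have -> : (x == tau0) = false by apply: contraNF nl => /eqP ->; apply: tau0_lower_W.
  by rewrite mulr0 addr0 subrr.
have -> : \sum_x incidence p.2 x * phi x =
    flow_boundary W t p.2 - flow_boundary V t p.2 + lam * flow_boundary V tau0 p.2.
  rewrite /flow_boundary big_distrr -sumrB -big_split /=.
  by apply: eq_bigr => x _; rewrite /phi; ring.
rewrite (flow_boundary_matched W_acyclic W_shape W_upper_inj W_lower_inj pW); last first.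
  by apply: contra t_nlW => /eqP <-; apply/imsetP; exists p.
case: (upper_W pW) => [[q qV <-]|->]; first by rewrite !V_bdry // mulr0 subr0 addr0.
rewrite !flow_boundary_sigma0 -/eps /lam.
set m := mcoef V _ sigma0 t; have -> : eps * m * eps = eps * eps * m by ring.
by rewrite eps_sqr mul1r; ring.
Qed.

Lemma mcoef_W_level t s : crit D V k t -> t != tau0 -> crit D W k.+1 s ->
  mcoef W k.+1 s t = mcoef V k.+1 s t - eps * mcoef V k.+1 sigma0 t * mcoef V k.+1 s tau0.
Proof.
move=> ct nt csW.
have csV : crit D V k.+1 s by move: csW; rewrite crit_W_upper_level => /andP[].
have sz : #|s| = k.+1 by case/critP: csV.
have nsW := crit_not_upper W_shape csW (k_gt0 : 1 < k.+1)%N.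
have nsV := crit_not_upper V_shape csV (k_gt0 : 1 < k.+1)%N.
rewrite (mcoef_morse_sum W_shape W_upper_inj _ sz nsW) (morse_sum_unmatched W_acyclic _ nsW).
rewrite !(mcoef_morse_sum V_shape V_upper_inj _ sz nsV) !(morse_sum_unmatched V_acyclic _ nsV).
rewrite /flow_boundary; under eq_bigr do rewrite flow_W // mulrBr mulrCA.
by rewrite sumrB -big_distrr.
Qed.

Lemma cobd_W_far (q : nat) : (k.+1 < q)%N \/ (q.+1 < k)%N -> cobd D W q =1 cobd D V q.
Proof.
move=> hq ch; apply/ffunP => s; rewrite !ffunE.
have [qk qk1 qk' qk1'] : [/\ q != k, q != k.+1, q.+1 != k & q.+1 != k.+1] by split; lia.
rewrite crit_W_off_level //; case: ifP => // csV.
apply: eq_big => [t|t ctW]; first exact: crit_W_off_level.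
have ctV : crit D V q t by rewrite -crit_W_off_level.
have sz : #|s| = q.+1 by case/critP: csV.
rewrite mcoef_W_off_level //; apply: crit_not_upper V_shape csV _.
by have := crit_gt0 ctV; lia.
Qed.

Lemma cobd_W_below b : crit D W k.-1 b ->
  cobd D W k.-1 (basis_chain b) =
  [ffun t => if t == tau0 then 0 else cobd D V k.-1 (basis_chain b) t].
Proof.
move=> cb; have k2 : (2 <= k)%N by have := crit_gt0 cb; lia.
have cbV : crit D V k.-1 b by rewrite -crit_W_off_level //; lia.
apply/ffunP => t; rewrite !ffunE prednK // crit_W_lower_level //.
have [->|nt] := eqVneq t tau0; first by rewrite andbF.
rewrite andbT; case: ifP => // ctV; rewrite (sum_basis_chain _ cb) (sum_basis_chain _ cbV).
have sz : #|t| = k by case/critP: ctV.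
by rewrite mcoef_W_off_level //; [lia | apply: crit_not_upper V_shape ctV k2].
Qed.

Lemma cobd_W_above (ch : chain N) : inC D W k.+1 ch -> cobd D W k.+1 ch = cobd D V k.+1 ch.
Proof.
move=> hc; apply/ffunP => s; rewrite !ffunE crit_W_off_level; try lia.
case: ifP => // csV; have sz : #|s| = k.+2 by case/critP: csV.
rewrite big_mkcond [RHS]big_mkcond /=; apply: eq_bigr => t _.
have [ctW|nctW] := boolP (crit D W k.+1 t).
  have ctV : crit D V k.+1 t by move: ctW; rewrite crit_W_upper_level => /andP[].
  by rewrite ctV mcoef_W_off_level //; [lia | apply: crit_not_upper V_shape csV _].
have -> : ch t = 0 by apply/eqP; apply: contraNT nctW => /hc.
by rewrite mul0r; case: ifP.
Qed.

Lemma cobd_W_level t : crit D V k t -> t != tau0 ->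
  cobd D W k (basis_chain t) =
  [ffun s => if crit D V k.+1 s && (s != sigma0) then
      cobd D V k (basis_chain t) s
      - cobd D V k (basis_chain tau0) sigma0 * cobd D V k (basis_chain t) sigma0
        * cobd D V k (basis_chain tau0) s
    else 0].
Proof.
move=> ct nt; apply/ffunP => s; rewrite !ffunE -crit_W_upper_level.
case: ifP => // csW; have csV : crit D V k.+1 s by move: csW; rewrite crit_W_upper_level => /andP[].
rewrite (sum_basis_chain _ (crit_W_lower ct nt)) csV sigma0_crit.
rewrite !(sum_basis_chain _ ct) !(sum_basis_chain _ tau0_crit).
exact: mcoef_W_level.
Qed.

End Cancellation.

Theorem theorem3p3 (N d k : nat) (D : {set {set 'I_N}})
    (V : {set {set 'I_N} * {set 'I_N}}) (sigma0 tau0 : {set 'I_N})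
    (P : seq ({set 'I_N} * {set 'I_N})) :
  is_complex D -> complex_dim D d -> gradient D V ->
  (1 <= k <= d)%N ->
  crit D V k.+1 sigma0 -> crit D V k tau0 ->
  is_traj V k.+1 sigma0 P tau0 ->
  (forall P', is_traj V k.+1 sigma0 P' tau0 -> P' = P) ->
  let W := cancelW V sigma0 P tau0 in
  [/\ (* (1) *)
      forall q : nat, (k.+1 < q)%N \/ (q.+1 < k)%N ->
        [/\ forall s, crit D W q s = crit D V q s,
            forall s, crit D W q.+1 s = crit D V q.+1 s &
            forall c, cobd D W q c = cobd D V q c],
      (* (2) *)
      forall beta, crit D W k.-1 beta ->
        cobd D W k.-1 (basis_chain beta)
        = [ffun t => if t == tau0 then 0 else cobd D V k.-1 (basis_chain beta) t],
      (* (3) *)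
      [/\ forall s, crit D W k.+1 s -> crit D V k.+1 s,
          forall s, crit D W k.+2 s = crit D V k.+2 s &
          forall c, inC D W k.+1 c -> cobd D W k.+1 c = cobd D V k.+1 c] &
      (* (4) *)
      forall tau, crit D V k tau -> tau != tau0 ->
        cobd D W k (basis_chain tau)
        = [ffun s => if crit D V k.+1 s && (s != sigma0) then
              cobd D V k (basis_chain tau) s
              - cobd D V k (basis_chain tau0) sigma0
                * cobd D V k (basis_chain tau) sigma0
                * cobd D V k (basis_chain tau0) s
            else 0]].
Proof.
move=> _ _ gr /andP[k_gt0 _] cs ct tr un W; split.
- move=> q hq; split; last exact: (cobd_W_far gr k_gt0 cs ct tr).
  + by move=> s; apply: (crit_W_off_level gr k_gt0 cs ct tr); lia.
  + by move=> s; apply: (crit_W_off_level gr k_gt0 cs ct tr); lia.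
- exact: (cobd_W_below gr k_gt0 cs ct tr).
- split=> [s|s|]; last exact: (cobd_W_above gr k_gt0 cs ct tr).
  + by rewrite (crit_W_upper_level gr k_gt0 cs ct tr) => /andP[].
  + by apply: (crit_W_off_level gr k_gt0 cs ct tr); lia.
- exact: (cobd_W_level gr k_gt0 cs ct tr un).
Qed.
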